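(* Let $G$ be a search game (as defined in the context) whose payoffs are ordinally consistent and solitary-search dominant, in which social value outweighs cost, and which admits a redundancy-free pure strategy profile. Then $G$ admits a pure Nash equilibrium $s$ that is cost-inclusive socially optimal, i.e., $U_{CI}(s)=\max_{s'\in S}U_{CI}(s')$.
   Context: A search game $G=(N,\Omega,\Pi,\mu,K,c,v)$ consists of: a finite set of players $N=\{1,\ldots,n\}$; a finite set $\Omega$ of locations; for each player $i$ a partition $\Pi_i$ of $\Omega$, with $\pi_i(\omega)$ the cell containing $\omega$; a common prior $\mu\in\Delta(\Omega)$ with $\mu(\pi_i)>0$ for every cell of every player, and $\mu(\omega|\pi_i)=\mu(\omega)/\mu(\pi_i)$ for $\omega\in\pi_i$; capacities $K_i\in\mathbb{N}$; costs $c_i:\{0,\ldots,K_i\}\to\mathbb{R}_{\ge0}$ with $c_i(0)=0$ and nondecreasing increments $c_i(k+1)-c_i(k)\ge c_i(k)-c_i(k-1)$; rewards $v_i^m(\omega)\ge0$ with $v_i^{m+1}(\omega)\le v_i^m(\omega)$; social values $v_{\mathfrak{s}}(\omega)\ge0$. A pure strategy $s_i$ assigns to each cell $\pi_i$ a subset $s_i(\pi_i)\subseteq\pi_i$ of size at most $K_i$; $S$ is the set of pure profiles. With $m_s(\omega)=\sum_{i}\mathbf{1}_{\omega\in s_i(\pi_i(\omega))}$, player $i$'s payoff is $u_i(s)=\sum_{\omega}\mu(\omega)\big[\mathbf{1}_{\omega\in s_i(\pi_i(\omega))}v_i^{m_s(\omega)}(\omega)-c_i(|s_i(\pi_i(\omega))|)\big]$;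 a pure Nash equilibrium is a pure profile from which no player gains by a unilateral deviation to another pure strategy. The cost-inclusive social payoff is $U_{CI}(s)=\sum_{\omega}\mu(\omega)\big[v_{\mathfrak{s}}(\omega)\mathbf{1}_{m_s(\omega)\ge1}-\sum_{i\in N}c_i(|s_i(\pi_i(\omega))|)\big]$. Payoffs are ordinally consistent if for every player $i$, cell $\pi_i$ and $\omega,\omega'\in\pi_i$: $\mu(\omega)v_i^1(\omega)<\mu(\omega')v_i^1(\omega')$ implies $\mu(\omega)v_{\mathfrak{s}}(\omega)\le\mu(\omega')v_{\mathfrak{s}}(\omega')$. Payoffs are solitary-search dominant if for every player $i$, cell $\pi_i$ and $\omega,\omega'\in\pi_i$: $\mu(\omega|\pi_i)v_i^1(\omega)\ge\mu(\omega'|\pi_i)v_i^2(\omega')$ and $\mu(\omega|\pi_i)v_i^1(\omega)\ge c_i(K_i)-c_i(K_i-1)$. Social value outweighs cost if $\mu(\omega)v_{\mathfrak{s}}(\omega)\ge\mu(\pi_i)\big(c_i(K_i)-c_i(K_i-1)\big)$ for every location $\omega$, player $i$ and cell $\pi_i\in\Pi_i$. A pure profile $s$ is redundancy-free if $|s_i(\pi_i)|=K_i$ for every cell $\pi_i$ of every player $i$, and $m_s(\omega)\le1$ for every $\omega\in\Omega$. *)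

From mathcomp Require Import all_boot all_order all_algebra.
Set Implicit Arguments. Unset Strict Implicit. Unset Printing Implicit Defensive.
Import Order.TTheory GRing.Theory Num.Theory.
Local Open Scope ring_scope.

Section SearchGame.
Variables (R : realFieldType) (n : nat) (Omega : finType).

(* Partition of each player: a MathComp partition of the whole location set;
   pi_i(w) is pblock (P i) w. *)
Definition cellof (P : 'I_n -> {set {set Omega}}) (i : 'I_n) (w : Omega)
  : {set Omega} := pblock (P i) w.

(* A pure strategy of player i: to each cell C of P i, a subset of C of size <= K i
   (values on non-cells are irrelevant). *)
Definition strategy := {set Omega} -> {set Omega}.
Definition profile := 'I_n -> strategy.

Definition strategy_ok (P : 'I_n -> {set {set Omega}}) (K : 'I_n -> nat)
  (i : 'I_n) (t : strategy) : Prop :=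
  forall C, C \in P i -> t C \subset C /\ (#|t C| <= K i)%N.

Definition profile_ok (P : 'I_n -> {set {set Omega}}) (K : 'I_n -> nat) (s : profile) : Prop := forall i, strategy_ok P K i (s i).

Definition mult (P : 'I_n -> {set {set Omega}}) (s : profile) (w : Omega) : nat :=
  #|[set i : 'I_n | w \in s i (cellof P i w)]|.

Definition deviate (s : profile) (i : 'I_n) (t : strategy) : profile :=
  fun j => if j == i then t else s j.

Definition mass (mu : Omega -> R) (C : {set Omega}) : R := \sum_(w in C) mu w.

Definition payoff (P : 'I_n -> {set {set Omega}}) (mu : Omega -> R) (v : 'I_n -> nat -> Omega -> R)
  (c : 'I_n -> nat -> R) (s : profile) (i : 'I_n) : R :=
  \sum_(w : Omega) mu w *
    ((if w \in s i (cellof P i w) then v i (mult P s w) w else 0)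
     - c i #|s i (cellof P i w)|).

Definition pure_NE (P : 'I_n -> {set {set Omega}}) (K : 'I_n -> nat) (mu : Omega -> R)
  (v : 'I_n -> nat -> Omega -> R) (c : 'I_n -> nat -> R) (s : profile) : Prop :=
  profile_ok P K s /\
  forall i (t : strategy), strategy_ok P K i t ->
    payoff P mu v c (deviate s i t) i <= payoff P mu v c s i.

Definition U_CI (P : 'I_n -> {set {set Omega}}) (mu : Omega -> R) (vs : Omega -> R) (c : 'I_n -> nat -> R)
  (s : profile) : R :=
  \sum_(w : Omega) mu w *
    ((if (0 < mult P s w)%N then vs w else 0)
     - \sum_(i : 'I_n) c i #|s i (cellof P i w)|).

Definition is_search_game (P : 'I_n -> {set {set Omega}}) (mu : Omega -> R)
  (K : 'I_n -> nat) (c : 'I_n -> nat -> R) (v : 'I_n -> nat -> Omega -> R)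
  (vs : Omega -> R) : Prop :=
  (forall i, partition (P i) [set: Omega]) /\
      ((forall w, 0 <= mu w) /\ \sum_(w : Omega) mu w = 1) /\
      (forall i C, C \in P i -> 0 < mass mu C) /\
      (forall i, c i 0%N = 0 /\ (forall k, (k <= K i)%N -> 0 <= c i k) /\
         (forall k, (0 < k)%N -> (k < K i)%N ->
            c i k - c i k.-1 <= c i k.+1 - c i k)) /\
      ((forall i m w, (1 <= m <= n)%N -> 0 <= v i m w) /\
       (forall i m w, (1 <= m)%N -> (m < n)%N -> v i m.+1 w <= v i m w)) /\
      (forall w, 0 <= vs w).

Definition ordinally_consistent (P : 'I_n -> {set {set Omega}}) (mu : Omega -> R)
  (v : 'I_n -> nat -> Omega -> R) (vs : Omega -> R) : Prop :=
  forall i C, C \in P i -> forall w w', w \in C -> w' \in C ->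
    mu w * v i 1%N w < mu w' * v i 1%N w' -> mu w * vs w <= mu w' * vs w'.

Definition margK (K : 'I_n -> nat) (c : 'I_n -> nat -> R) (i : 'I_n) : R :=
  c i (K i) - c i (K i).-1.

Definition solitary_search_dominant (P : 'I_n -> {set {set Omega}}) (mu : Omega -> R)
  (K : 'I_n -> nat) (c : 'I_n -> nat -> R) (v : 'I_n -> nat -> Omega -> R) : Prop :=
  forall i C, C \in P i -> forall w w', w \in C -> w' \in C ->
    mu w' / mass mu C * v i 2%N w' <= mu w / mass mu C * v i 1%N w /\
    margK K c i <= mu w / mass mu C * v i 1%N w.

Definition social_value_outweighs_cost (P : 'I_n -> {set {set Omega}}) (mu : Omega -> R)
  (K : 'I_n -> nat) (c : 'I_n -> nat -> R) (vs : Omega -> R)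
  : Prop :=
  forall w i C, C \in P i -> mass mu C * margK K c i <= mu w * vs w.

Definition redundancy_free (P : 'I_n -> {set {set Omega}}) (K : 'I_n -> nat) (s : profile) : Prop :=
  profile_ok P K s /\
  (forall i C, C \in P i -> #|s i C| = K i) /\
  (forall w, (mult P s w <= 1)%N).

End SearchGame.

From mathcomp Require Import all_boot all_order all_algebra ring lra zify.
From Stdlib Require Import FunctionalExtensionality ClassicalEpsilon.
Set Implicit Arguments. Unset Strict Implicit. Unset Printing Implicit Defensive.
Import Order.TTheory GRing.Theory Num.Theory.
Local Open Scope ring_scope.

(* Any profile can be turned into a redundancy-free one without lowering U_CI:
   redundant searches are dropped (coverage is kept, cost does not grow), and
   each free search slot is filled along an augmenting path through a
   redundancy-free profile, which covers one new location whose social value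
   pays for the marginal cost.  Hence a redundancy-free profile maximizing U_CI,
   with ties broken by the total solitary value of its searches, is socially
   optimal.  It is also an equilibrium: exchanging a searched location for an
   unsearched one of the same cell keeps the cost, does not lower the social
   value (ordinal consistency) and would raise the tie-breaker, so searched
   locations dominate unsearched ones; solitary-search dominance handles
   locations searched by others and, with convexity, the saved costs. *)

Lemma nat_measure_ind (T : Type) (f : T -> nat) (Q : T -> Prop) :
  (forall x, (forall y, (f y < f x)%N -> Q y) -> Q x) -> forall x, Q x.
Proof.
move=> IH x; have [m] := ubnP (f x); elim: m x => // m IHm x fx_lt.
by apply: IH => y fy_lt; apply: IHm; apply: leq_trans fy_lt _.
Qed.

Section RealLemmas.
Variable R : realFieldType.

Lemma finite_lex_argmax (T : finType) (Q : T -> Prop) (f g : T -> R) :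
  (exists x, Q x) ->
  exists x, Q x /\ forall y, Q y -> f y <= f x /\ (f y = f x -> g y <= g x).
Proof.
move=> [x0 Qx0].
pose Qb x := if excluded_middle_informative (Q x) then true else false.
have QbP x : reflect (Q x) (Qb x).
  by rewrite /Qb; case: excluded_middle_informative => Qx; constructor.
have [x1 /QbP Qx1 f_max] := arg_maxP f (introT (QbP x0) Qx0).
have Q'x1 : Qb x1 && (f x1 == f x1) by rewrite eqxx andbT; apply/QbP.
have [x /andP[/QbP Qx /eqP fx] g_max] :=
  @arg_maxP _ _ _ _ (fun x => Qb x && (f x == f x1)) g Q'x1.
exists x; split=> // y Qy; rewrite fx; split; first exact/f_max/QbP.
by move=> fy; apply: g_max; rewrite fy eqxx andbT; apply/QbP.
Qed.

Lemma profile_lex_argmax n (Omega : finType) (Q : profile n Omega -> Prop)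
  (f g : profile n Omega -> R) :
  (exists s, Q s) ->
  exists s, Q s /\ forall s', Q s' -> f s' <= f s /\ (f s' = f s -> g s' <= g s).
Proof.
pose of_ffun (F : {ffun 'I_n -> {ffun {set Omega} -> {set Omega}}}) : profile n Omega :=
  fun i => F i.
have of_ffun_onto s : exists F, of_ffun F = s.
  exists [ffun i => [ffun D => s i D]]; apply: functional_extensionality => i.
  by apply: functional_extensionality => D; rewrite /of_ffun !ffunE.
move=> [s0 Qs0]; have [F0 F0E] := of_ffun_onto s0.
have [|F [QF F_max]] := @finite_lex_argmax _ (Q \o of_ffun) (f \o of_ffun) (g \o of_ffun).
  by exists F0; rewrite /= F0E.
exists (of_ffun F); split=> // s'; have [F' <-] := of_ffun_onto s'.
exact: F_max.
Qed.

Lemma ler_sum_pairwise (T : finType) (A B : {set T}) (f g : T -> R) (h : R) d :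
  #|A| = (#|B| + d)%N ->
  (forall u w, u \in A -> w \in B -> f w <= g u) ->
  (forall u, u \in A -> h <= g u) ->
  \sum_(w in B) f w + d%:R * h <= \sum_(u in A) g u.
Proof.
move=> cardA f_le_g h_le_g.
have [A0|[u0 Au0]] := set_0Vmem A.
  have [B0 d0] : B = set0 /\ d = 0%N.
    move: cardA; rewrite A0 cards0 => /esym/eqP.
    by rewrite addn_eq0 cards_eq0 => /andP[/eqP -> /eqP ->].
  by rewrite A0 B0 d0 !big_set0 mul0r addr0.
have [m Am m_min] := arg_minP g Au0.
have sumB : \sum_(w in B) f w <= #|B|%:R * g m.
  by rewrite mulr_natl -sumr_const; apply: ler_sum => w Bw; apply: f_le_g.
have sumA : (#|B| + d)%:R * g m <= \sum_(u in A) g u.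
  by rewrite -cardA mulr_natl -sumr_const; apply: ler_sum => u Au; apply: m_min.
have dh : d%:R * h <= d%:R * g m by apply: ler_wpM2l; [apply: ler0n | apply: h_le_g].
by move: sumA; rewrite natrD mulrDl; lra.
Qed.

Lemma sumr_setU1D1 (T : finType) (A : {set T}) (F : T -> R) u w :
  u \in A -> w \notin A -> \sum_(x in w |: (A :\ u)) F x = \sum_(x in A) F x - F u + F w.
Proof.
move=> Au wA; rewrite big_setU1 ?(big_setD1 u Au) /=; first lra.
by rewrite !inE negb_and wA orbT.
Qed.

End RealLemmas.

Section SearchGame.
Variables (R : realFieldType) (n : nat) (Omega : finType)
  (P : 'I_n -> {set {set Omega}}) (mu : Omega -> R) (K : 'I_n -> nat)
  (c : 'I_n -> nat -> R) (v : 'I_n -> nat -> Omega -> R) (vs : Omega -> R).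
Hypothesis partP : forall i, partition (P i) [set: Omega].

Local Notation profile := (profile n Omega).
Local Notation cell i w := (cellof P i w).

Lemma cover_cells i : cover (P i) = [set: Omega].
Proof. by case/and3P: (partP i) => /eqP. Qed.

Lemma trivIset_cells i : trivIset (P i).
Proof. by case/and3P: (partP i). Qed.

Lemma cell_mem i w : cell i w \in P i.
Proof. by rewrite /cellof pblock_mem // cover_cells in_setT. Qed.

Lemma mem_cell i w : w \in cell i w.
Proof. by rewrite /cellof mem_pblock cover_cells in_setT. Qed.

Lemma cell_eq i C w : C \in P i -> w \in C -> cell i w = C.
Proof. exact: def_pblock (trivIset_cells i). Qed.

Lemma eq_cell_of_mem j w x : x \in cell j w -> cell j x = cell j w.
Proof. exact/cell_eq/cell_mem. Qed.

Lemma sum_by_cells i (F : Omega -> R) :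
  \sum_w F w = \sum_(C in P i) \sum_(w in C) F w.
Proof.
rewrite -(big_trivIset _ (trivIset_cells i)) cover_cells.
by apply: eq_bigl => w; rewrite in_setT.
Qed.

Definition searches (s : profile) i w := w \in s i (cell i w).
Definition searchers (s : profile) w := [set i | searches s i w].
Definition searched_pairs (s : profile) := [set p : 'I_n * Omega | searches s p.1 p.2].
Definition covered (s : profile) := [set w | (0 < mult P s w)%N].
Definition exclusive (s : profile) := forall w, (mult P s w <= 1)%N.

Lemma mult_searchers s w : mult P s w = #|searchers s w|.
Proof. by []. Qed.

Lemma searches_cell s i C w : C \in P i -> w \in C -> searches s i w = (w \in s i C).
Proof. by move=> PiC Cw; rewrite /searches (cell_eq PiC Cw). Qed.

Lemma exclusive_searches s i j w :
  exclusive s -> searches s i w -> searches s j w -> i = j.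
Proof.
by move=> excl_s si sj; apply: (card_le1_eqP (excl_s w)); rewrite inE.
Qed.

Lemma exclusive_searchers s i w :
  exclusive s -> searches s i w -> searchers s w = [set i].
Proof.
move=> excl_s si; apply/setP => j; rewrite !inE.
by apply/idP/eqP => [sj | ->]; [exact: exclusive_searches sj si |].
Qed.

Lemma in_covered s w : (w \in covered s) = (searchers s w != set0).
Proof. by rewrite inE mult_searchers card_gt0. Qed.

Lemma searches_covered s i w : searches s i w -> w \in covered s.
Proof. by move=> si; rewrite in_covered; apply/set0Pn; exists i; rewrite inE. Qed.

Definition set_cell (s : profile) j (C X : {set Omega}) : profile :=
  fun i D => if (i == j) && (D == C) then X else s i D.

Lemma set_cell_eq s j C X : set_cell s j C X j C = X.
Proof. by rewrite /set_cell !eqxx. Qed.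

Lemma set_cell_neq s j C X i D : (i, D) != (j, C) -> set_cell s j C X i D = s i D.
Proof. by rewrite /set_cell xpair_eqE => /negbTE ->. Qed.

Lemma searches_set_cell s j C X i x : C \in P j ->
  searches (set_cell s j C X) i x =
  if (i == j) && (x \in C) then x \in X else searches s i x.
Proof.
move=> PjC; rewrite /searches /set_cell; case: eqP => [->|] //=.
have [Cx|Cx] := boolP (x \in C); first by rewrite (cell_eq PjC Cx) eqxx.
by case: eqP => // cell_x; move: Cx; rewrite -cell_x mem_cell.
Qed.

Lemma set_cell_ok s j (C X : {set Omega}) : profile_ok P K s -> C \in P j ->
  X \subset C -> (#|X| <= K j)%N -> profile_ok P K (set_cell s j C X).
Proof.
move=> s_ok PjC XC XK i D PiD; have [eq_iD|neq_iD] := eqVneq (i, D) (j, C).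
  by case: eq_iD => -> ->; rewrite set_cell_eq.
by rewrite set_cell_neq //; apply: s_ok.
Qed.

Definition drop_search (s : profile) i w := set_cell s i (cell i w) (s i (cell i w) :\ w).
Definition add_search (s : profile) i w := set_cell s i (cell i w) (w |: s i (cell i w)).

Lemma searches_drop s i w j x :
  searches (drop_search s i w) j x = searches s j x && ((j, x) != (i, w)).
Proof.
rewrite searches_set_cell ?cell_mem // xpair_eqE negb_and.
case: eqP => [->|] /=; last by rewrite andbT.
have [Cx|Cx] := boolP (x \in cell i w).
  by rewrite in_setD1 /searches (eq_cell_of_mem Cx) andbC.
by case: eqP => [xw|]; [move: Cx; rewrite xw mem_cell | rewrite andbT].
Qed.

Lemma searches_add s i w j x :
  searches (add_search s i w) j x = searches s j x || ((j, x) == (i, w)).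
Proof.
rewrite searches_set_cell ?cell_mem // xpair_eqE.
case: eqP => [->|] /=; last by rewrite orbF.
have [Cx|Cx] := boolP (x \in cell i w).
  by rewrite in_setU1 /searches (eq_cell_of_mem Cx) orbC.
by case: eqP => [xw|]; [move: Cx; rewrite xw mem_cell | rewrite orbF].
Qed.

Lemma searchers_drop s i w x :
  searchers (drop_search s i w) x = if x == w then searchers s x :\ i else searchers s x.
Proof.
apply/setP => j; rewrite inE searches_drop xpair_eqE.
by case: (eqVneq x w) => [->|_]; rewrite ?inE ?andbT ?andbF ?andbT // andbC.
Qed.

Lemma searchers_add s i w x :
  searchers (add_search s i w) x = if x == w then i |: searchers s x else searchers s x.
Proof.
apply/setP => j; rewrite inE searches_add xpair_eqE.
by case: (eqVneq x w) => [->|_]; rewrite ?inE ?andbT ?andbF ?orbF // orbC.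
Qed.

Lemma searched_pairs_drop s i w :
  searched_pairs (drop_search s i w) = searched_pairs s :\ (i, w).
Proof. by apply/setP => -[j x]; rewrite !inE searches_drop andbC. Qed.

Lemma searched_pairs_add s i w :
  searched_pairs (add_search s i w) = (i, w) |: searched_pairs s.
Proof. by apply/setP => -[j x]; rewrite !inE searches_add orbC. Qed.

Lemma covered_add s i w : covered (add_search s i w) = w |: covered s.
Proof.
apply/setP => x; rewrite in_setU1 !in_covered searchers_add.
by case: (eqVneq x w) => //= _; apply/set0Pn; exists i; rewrite setU11.
Qed.

Lemma covered_drop_sole s i w :
  searchers s w = [set i] -> covered (drop_search s i w) = covered s :\ w.
Proof.
move=> sole; apply/setP => x; rewrite in_setD1 !in_covered searchers_drop.
by case: (eqVneq x w) => [->|] //=; rewrite sole setDv eqxx.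
Qed.

Lemma covered_drop_shared s i i' w : searches s i' w -> i' != i ->
  covered (drop_search s i w) = covered s.
Proof.
move=> si' i'i; apply/setP => x; rewrite !in_covered searchers_drop.
case: (eqVneq x w) => [->|] //=; apply/idP/idP => _; apply/set0Pn; exists i';
  by rewrite !inE ?i'i.
Qed.

Lemma exclusive_drop s i w : exclusive s -> exclusive (drop_search s i w).
Proof.
move=> excl_s x; rewrite mult_searchers searchers_drop.
by case: eqP => _; rewrite ?(leq_trans (subset_leq_card (subsetDl _ _))) ?excl_s.
Qed.

Lemma exclusive_add s i w :
  exclusive s -> w \notin covered s -> exclusive (add_search s i w).
Proof.
move=> excl_s; rewrite in_covered negbK => /eqP unsearched x.
rewrite mult_searchers searchers_add.
by case: eqP => [->|_]; rewrite ?unsearched ?setU0 ?cards1 ?excl_s.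
Qed.

Lemma drop_search_ok s i w : profile_ok P K s -> profile_ok P K (drop_search s i w).
Proof.
move=> s_ok; have [sub_C le_K] := s_ok i _ (cell_mem i w).
apply: set_cell_ok; rewrite ?cell_mem //; first exact: subset_trans (subsetDl _ _) sub_C.
exact: leq_trans (subset_leq_card (subsetDl _ _)) le_K.
Qed.

Lemma add_search_ok s i w : profile_ok P K s ->
  (#|s i (cell i w)| < K i)%N -> profile_ok P K (add_search s i w).
Proof.
move=> s_ok lt_K; have [sub_C _] := s_ok i _ (cell_mem i w).
apply: set_cell_ok; rewrite ?cell_mem // ?subUset ?sub1set ?mem_cell ?sub_C //.
by rewrite cardsU1; case: (w \in _) => /=; rewrite ?add0n ?add1n // ltnW.
Qed.

Definition total_cost (s : profile) := \sum_w mu w * \sum_i c i #|s i (cell i w)|.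
Definition social_value (s : profile) := \sum_(w in covered s) mu w * vs w.
Definition marginal_cost i k := c i k.+1 - c i k.

Lemma U_CI_split s : U_CI P mu vs c s = social_value s - total_cost s.
Proof.
rewrite /U_CI /social_value /total_cost [\sum_(w in covered s) _]big_mkcond -sumrB.
by apply: eq_bigr => w _; rewrite inE mulrBr; case: ifP; rewrite ?mulr0.
Qed.

Lemma total_cost_by_cells s :
  total_cost s = \sum_i \sum_(C in P i) mass mu C * c i #|s i C|.
Proof.
rewrite /total_cost; under eq_bigr do rewrite mulr_sumr.
rewrite exchange_big; apply: eq_bigr => i _; rewrite (sum_by_cells i).
apply: eq_bigr => C PiC; rewrite /mass mulr_suml; apply: eq_bigr => w Cw.
by rewrite (cell_eq PiC Cw).
Qed.

Lemma total_cost_set_cell s j C X : C \in P j ->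
  total_cost (set_cell s j C X) =
  total_cost s + mass mu C * (c j #|X| - c j #|s j C|).
Proof.
move=> PjC; rewrite !total_cost_by_cells (bigD1 j) // [in RHS](bigD1 j) //=.
rewrite (bigD1 C) // [in X in _ = X + _](bigD1 C) //= set_cell_eq.
have other_cells : \sum_(D in P j | D != C) mass mu D * c j #|set_cell s j C X j D| =
                   \sum_(D in P j | D != C) mass mu D * c j #|s j D|.
  by apply: eq_bigr => D /andP[_ DC]; rewrite set_cell_neq // xpair_eqE eqxx.
have other_players : \sum_(i | i != j) \sum_(D in P i) mass mu D * c i #|set_cell s j C X i D| =
                     \sum_(i | i != j) \sum_(D in P i) mass mu D * c i #|s i D|.
  apply: eq_bigr => i ij; apply: eq_bigr => D _.
  by rewrite set_cell_neq // xpair_eqE (negbTE ij).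
by rewrite other_cells other_players; ring.
Qed.

Lemma total_cost_drop s i w : searches s i w ->
  total_cost (drop_search s i w) =
  total_cost s - mass mu (cell i w) * marginal_cost i #|s i (cell i w) :\ w|.
Proof.
move=> si; rewrite total_cost_set_cell ?cell_mem //.
by rewrite [#|s i _|](cardsD1 w) (si : w \in _) add1n /marginal_cost; ring.
Qed.

Lemma total_cost_add s i w : ~~ searches s i w ->
  total_cost (add_search s i w) =
  total_cost s + mass mu (cell i w) * marginal_cost i #|s i (cell i w)|.
Proof.
by move=> nsi; rewrite total_cost_set_cell ?cell_mem // cardsU1 (nsi : w \notin _).
Qed.

Lemma payoff_by_cells (s : profile) i : (forall C, C \in P i -> s i C \subset C) ->
  payoff P mu v c s i =
  \sum_(C in P i) (\sum_(w in s i C) mu w * v i (mult P s w) w - mass mu C * c i #|s i C|).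
Proof.
move=> sub_C; rewrite /payoff (sum_by_cells i); apply: eq_bigr => C PiC.
have -> : \sum_(w in s i C) mu w * v i (mult P s w) w =
          \sum_(w in C | w \in s i C) mu w * v i (mult P s w) w.
  by apply: eq_bigl => w; rewrite andb_idl // => /(subsetP (sub_C C PiC)).
rewrite big_mkcondr /mass mulr_suml -sumrB; apply: eq_bigr => w Cw.
by rewrite (cell_eq PiC Cw) mulrBr; case: ifP; rewrite ?mulr0.
Qed.

Lemma deviate_self (s : profile) i t : deviate s i t i = t.
Proof. by rewrite /deviate eqxx. Qed.

Lemma mult_deviate (s : profile) i (t : strategy Omega) w :
  exclusive s -> w \in t (cell i w) ->
  mult P (deviate s i t) w = if searches s i w then 1%N else (mult P s w).+1.
Proof.
move=> excl_s tw; rewrite !mult_searchers.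
have -> : searchers (deviate s i t) w = i |: searchers s w.
  apply/setP => j; rewrite !inE /searches /deviate.
  by case: eqVneq => [->|]; rewrite ?eqxx ?tw.
case: ifP => si; last by rewrite cardsU1 inE si.
by rewrite (exclusive_searchers excl_s si) setUid cards1.
Qed.

Lemma mult_exclusive s i w : exclusive s -> searches s i w -> mult P s w = 1%N.
Proof. by move=> excl_s si; rewrite mult_searchers (exclusive_searchers excl_s si) cards1. Qed.

Hypothesis c0 : forall i, c i 0%N = 0.
Hypothesis c_ge0 : forall i k, (k <= K i)%N -> 0 <= c i k.
Hypothesis c_convex : forall i k, (0 < k)%N -> (k < K i)%N ->
  c i k - c i k.-1 <= c i k.+1 - c i k.

Lemma marginal_cost_le i k l : (k <= l)%N -> (l < K i)%N ->
  marginal_cost i k <= marginal_cost i l.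
Proof.
move=> kl lK.
apply: (@homo_leq_in _ [pred k | (k < K i)%N] (marginal_cost i) (fun x y => x <= y)) => //.
- by move=> ? ? ?; exact: le_trans.
- by move=> a b _; rewrite !inE => bK x /andP[_ xb]; apply: ltn_trans xb bK.
- by move=> a _; rewrite inE => a1K; apply: (c_convex (ltn0Sn a) a1K).
- by rewrite inE (leq_ltn_trans kl lK).
Qed.

Lemma marginal_cost_ge0 i k : (k < K i)%N -> 0 <= marginal_cost i k.
Proof.
move=> kK; apply: le_trans (marginal_cost_le (leq0n k) kK).
by rewrite /marginal_cost c0 subr0 c_ge0 // (leq_ltn_trans (leq0n k) kK).
Qed.

Lemma marginal_cost_le_margK i k : (k < K i)%N -> marginal_cost i k <= margK K c i.
Proof.
move=> kK; have K_gt0 : (0 < K i)%N by apply: leq_ltn_trans kK.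
have -> : margK K c i = marginal_cost i (K i).-1 by rewrite /marginal_cost prednK.
by apply: marginal_cost_le; lia.
Qed.

Lemma cost_gap_le i k : (k <= K i)%N ->
  c i (K i) - c i k <= (K i - k)%:R * margK K c i.
Proof.
move=> kK; rewrite -(telescope_sumr (c i) kK) mulr_natl -sumr_const_nat.
by apply: ler_sum_nat => l /andP[_]; apply: marginal_cost_le_margK.
Qed.

Lemma card_drop_lt s i w : profile_ok P K s -> searches s i w ->
  (#|s i (cell i w) :\ w| < K i)%N.
Proof.
move=> s_ok si; have [_ le_K] := s_ok i _ (cell_mem i w).
by apply: leq_trans le_K; rewrite [in X in (_ < X)%N](cardsD1 w) (si : w \in _).
Qed.

Definition transfer_search (s : profile) k j w := add_search (drop_search s k w) j w.

Section Transfer.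
Variables (s : profile) (k j : 'I_n) (w : Omega).
Hypotheses (excl_s : exclusive s) (sk : searches s k w) (kj : k != j).

Let drop_cell_j : drop_search s k w j (cell j w) = s j (cell j w).
Proof. by rewrite /drop_search set_cell_neq // xpair_eqE eq_sym (negbTE kj). Qed.

Let not_searches_j : ~~ searches (drop_search s k w) j w.
Proof.
rewrite searches_drop; apply/negP => /andP[sj _].
by move/negP: kj; apply; rewrite (exclusive_searches excl_s sk sj).
Qed.

Lemma transfer_search_ok : profile_ok P K s ->
  (#|s j (cell j w)| < K j)%N -> profile_ok P K (transfer_search s k j w).
Proof.
by move=> s_ok lt_K; apply: add_search_ok; rewrite ?drop_cell_j //; apply: drop_search_ok.
Qed.

Lemma transfer_search_cell :
  transfer_search s k j w k (cell k w) = s k (cell k w) :\ w.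
Proof.
rewrite /transfer_search /add_search set_cell_neq; first exact: set_cell_eq.
by rewrite xpair_eqE (negbTE kj).
Qed.

Let covered_drop : covered (drop_search s k w) = covered s :\ w.
Proof. exact/covered_drop_sole/exclusive_searchers. Qed.

Lemma exclusive_transfer : exclusive (transfer_search s k j w).
Proof.
by apply: exclusive_add; [exact: exclusive_drop | rewrite covered_drop setD11].
Qed.

Lemma covered_transfer : covered (transfer_search s k j w) = covered s.
Proof.
by rewrite covered_add covered_drop setD1K // (searches_covered sk).
Qed.

Lemma searched_pairs_transfer : searched_pairs (transfer_search s k j w) =
  (j, w) |: (searched_pairs s :\ (k, w)).
Proof. by rewrite searched_pairs_add searched_pairs_drop. Qed.

Lemma total_cost_transfer : total_cost (transfer_search s k j w) =
  total_cost s - mass mu (cell k w) * marginal_cost k #|s k (cell k w) :\ w|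
  + mass mu (cell j w) * marginal_cost j #|s j (cell j w)|.
Proof. by rewrite (total_cost_add not_searches_j) drop_cell_j total_cost_drop. Qed.

End Transfer.

Hypothesis mass_gt0 : forall i C, C \in P i -> 0 < mass mu C.

Lemma exclusive_improvement s : profile_ok P K s ->
  exists s', [/\ profile_ok P K s', exclusive s' & U_CI P mu vs c s <= U_CI P mu vs c s'].
Proof.
elim/(@nat_measure_ind _ (fun s => #|searched_pairs s|)): s => s IH s_ok.
have [excl_s|] := boolP [forall w, mult P s w <= 1]%N.
  by exists s; split => // w; apply: (forallP excl_s).
case/forallPn => w; rewrite -ltnNge mult_searchers => /card_gt1P[i [i' []]].
rewrite !inE => si si' ii'; have i'i : i' != i by rewrite eq_sym.
have fewer : (#|searched_pairs (drop_search s i w)| < #|searched_pairs s|)%N.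
  by rewrite searched_pairs_drop [in X in (_ < X)%N](cardsD1 (i, w)) inE si.
have [s' [s'_ok excl_s' le_s']] := IH _ fewer (drop_search_ok _ _ s_ok).
exists s'; split => //; apply: le_trans le_s'.
rewrite !U_CI_split /social_value (covered_drop_shared si' i'i).
have := mulr_ge0 (ltW (mass_gt0 (cell_mem i w))) (marginal_cost_ge0 (card_drop_lt s_ok si)).
by rewrite total_cost_drop //; lra.
Qed.

Section Improvement.
Variable s0 : profile.
Hypothesis s0_rf : redundancy_free P K s0.

(* An augmenting path: [s0] searches some [w] of [C] that [s] does not.  If
   another player [k] searches [w], hand [w] over to [j] and recurse on the
   cell of [k], which now has a free slot; every step adds one search of [s0],
   and the intermediate marginal costs telescope. *)
Lemma extend_exclusive s j C : profile_ok P K s -> exclusive s -> C \in P j ->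
  (#|s j C| < K j)%N ->
  exists s2, [/\ profile_ok P K s2, exclusive s2,
    exists2 w, w \notin covered s & covered s2 = w |: covered s &
    total_cost s2 = total_cost s + mass mu C * marginal_cost j #|s j C|].
Proof.
move: j C; elim/(@nat_measure_ind _ (fun s => #|searched_pairs s0 :\: searched_pairs s|)): s.
move=> s IH j C s_ok excl_s PjC lt_K; have [s0_ok [s0_full excl_s0]] := s0_rf.
have /subsetPn[w s0w sw] : ~~ (s0 j C \subset s j C).
  by apply: contraTN lt_K => /subset_leq_card; rewrite s0_full // leqNgt.
have Cw : w \in C by apply: subsetP s0w; exact: (s0_ok j C PjC).1.
have cell_w := cell_eq PjC Cw.
have nsj : ~~ searches s j w by rewrite (searches_cell _ PjC Cw).
have s0j : searches s0 j w by rewrite (searches_cell _ PjC Cw).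
have lt_Kj : (#|s j (cell j w)| < K j)%N by rewrite cell_w.
have [covw|uncovw] := boolP (w \in covered s); last first.
  exists (add_search s j w); split.
  - exact: add_search_ok.
  - exact: exclusive_add.
  - by exists w; rewrite ?covered_add.
  - by rewrite total_cost_add // cell_w.
move: covw; rewrite in_covered => /set0Pn[k]; rewrite inE => sk.
have kj : k != j by apply: contraNneq nsj => <-.
pose s1 := transfer_search s k j w.
have fewer : (#|searched_pairs s0 :\: searched_pairs s1| <
              #|searched_pairs s0 :\: searched_pairs s|)%N.
  suff : searched_pairs s0 :\: searched_pairs s1 \proper
         searched_pairs s0 :\: searched_pairs s by apply: proper_card.
  apply/properP; split; last first.
    exists (j, w); last by rewrite in_setD searched_pairs_transfer setU11.
    by rewrite !inE /= nsj.
  apply/subsetP => -[i x]; rewrite searched_pairs_transfer !inE /= negb_or.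
  move=> /andP[/andP[_ /nandP[/negPn/eqP[-> ->] | ->]] s0x] //.
  by rewrite (exclusive_searches excl_s0 s0x s0j) eqxx in kj.
have lt_Kk : (#|s1 k (cell k w)| < K k)%N.
  by rewrite /s1 transfer_search_cell // card_drop_lt.
have [s2 [s2_ok excl_s2 new_w cost_s2]] := IH s1 fewer k (cell k w)
  (transfer_search_ok kj s_ok lt_Kj) (exclusive_transfer j excl_s sk)
  (cell_mem k w) lt_Kk.
exists s2; split => //; first by rewrite -(covered_transfer j excl_s sk).
by rewrite cost_s2 /s1 total_cost_transfer // transfer_search_cell // cell_w; ring.
Qed.

Hypothesis value_outweighs_cost : social_value_outweighs_cost P mu K c vs.

Lemma redundancy_free_of_exclusive s : profile_ok P K s -> exclusive s ->
  exists2 s', redundancy_free P K s' & U_CI P mu vs c s <= U_CI P mu vs c s'.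
Proof.
elim/(@nat_measure_ind _ (fun s => #|~: covered s|)): s => s IH s_ok excl_s.
have [full|] := boolP [forall i, [forall C in P i, #|s i C| == K i]].
  exists s => //; split; [done | split; last done].
  by move=> i C PiC; apply/eqP; apply: (forall_inP (forallP full i)).
case/forallPn => j /forall_inPn[C PjC /eqP cardC].
have lt_K : (#|s j C| < K j)%N by rewrite ltn_neqAle (s_ok j C PjC).2 andbT; apply/eqP.
have [s2 [s2_ok excl_s2 [w uncovw cov_s2] cost_s2]] := extend_exclusive s_ok excl_s PjC lt_K.
have fewer : (#|~: covered s2| < #|~: covered s|)%N.
  have := cardsC (covered s); have := cardsC (covered s2).
  by rewrite cov_s2 cardsU1 uncovw; lia.
have [s' rf_s' le_s'] := IH s2 fewer s2_ok excl_s2.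
exists s' => //; apply: le_trans le_s'.
rewrite !U_CI_split /social_value cov_s2 big_setU1 //= cost_s2.
have := value_outweighs_cost w PjC.
have := ler_wpM2l (ltW (mass_gt0 PjC)) (marginal_cost_le_margK lt_K).
lra.
Qed.

Lemma redundancy_free_improvement s : profile_ok P K s ->
  exists2 s', redundancy_free P K s' & U_CI P mu vs c s <= U_CI P mu vs c s'.
Proof.
move=> /exclusive_improvement[s1 [s1_ok excl_s1 le_s1]].
have [s' rf_s' le_s'] := redundancy_free_of_exclusive s1_ok excl_s1.
by exists s' => //; apply: le_trans le_s'.
Qed.

End Improvement.

Definition solitary_welfare (s : profile) :=
  \sum_(p in searched_pairs s) mu p.2 * v p.1 1%N p.2.

Definition lex_maximal (s : profile) := forall s', redundancy_free P K s' ->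
  U_CI P mu vs c s' <= U_CI P mu vs c s /\
  (U_CI P mu vs c s' = U_CI P mu vs c s -> solitary_welfare s' <= solitary_welfare s).

Definition exchange_search (s : profile) i u w := add_search (drop_search s i u) i w.

Section Exchange.
Variables (s : profile) (i : 'I_n) (u w : Omega).
Hypotheses (s_rf : redundancy_free P K s) (su : searches s i u)
  (uncov_w : w \notin covered s) (same_cell : cell i w = cell i u).

Let excl_s : exclusive s. Proof. by case: s_rf => _ []. Qed.

Let nsw j : ~~ searches s j w.
Proof. exact: contra (@searches_covered s j w) uncov_w. Qed.

Let drop_cell : drop_search s i u i (cell i u) = s i (cell i u) :\ u.
Proof. exact: set_cell_eq. Qed.

Let exchange_cell : exchange_search s i u w i (cell i u) = w |: (s i (cell i u) :\ u).
Proof. by rewrite /exchange_search /add_search same_cell set_cell_eq drop_cell. Qed.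

Let ndw : ~~ searches (drop_search s i u) i w.
Proof. by rewrite searches_drop negb_and nsw. Qed.

Let covered_drop : covered (drop_search s i u) = covered s :\ u.
Proof. exact/covered_drop_sole/exclusive_searchers. Qed.

Lemma exchange_redundancy_free : redundancy_free P K (exchange_search s i u w).
Proof.
have [s_ok [s_full _]] := s_rf; have PiC := cell_mem i u.
split; [|split].
- apply: add_search_ok; first exact: drop_search_ok.
  by rewrite same_cell drop_cell card_drop_lt.
- move=> j D PjD; have [[-> ->]|jD] := eqVneq (j, D) (i, cell i u).
    have nAw : w \notin s i (cell i u) :\ u.
      by rewrite in_setD1 -same_cell negb_and (nsw i) orbT.
    rewrite exchange_cell cardsU1 nAw -(s_full i _ PiC).
    by rewrite [in RHS](cardsD1 u) (su : u \in _).
  rewrite /exchange_search /add_search set_cell_neq ?same_cell //.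
  by rewrite /drop_search set_cell_neq ?s_full.
- apply: exclusive_add; first exact: exclusive_drop.
  by rewrite covered_drop in_setD1 negb_and uncov_w orbT.
Qed.

Lemma covered_exchange : covered (exchange_search s i u w) = w |: (covered s :\ u).
Proof. by rewrite covered_add covered_drop. Qed.

Lemma searched_pairs_exchange :
  searched_pairs (exchange_search s i u w) = (i, w) |: (searched_pairs s :\ (i, u)).
Proof. by rewrite searched_pairs_add searched_pairs_drop. Qed.

Lemma total_cost_exchange : total_cost (exchange_search s i u w) = total_cost s.
Proof. by rewrite (total_cost_add ndw) same_cell drop_cell total_cost_drop // subrK. Qed.

End Exchange.

Section Equilibrium.
Hypothesis consistent : ordinally_consistent P mu v vs.
Hypothesis dominant : solitary_search_dominant P mu K c v.

Lemma crowded_value_le_solitary i C w w' : C \in P i -> w \in C -> w' \in C ->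
  mu w' * v i 2%N w' <= mu w * v i 1%N w.
Proof.
move=> PiC Cw Cw'; have := (dominant PiC Cw Cw').1.
by rewrite (mulrAC (mu w')) (mulrAC (mu w)) ler_pM2r // invr_gt0 (mass_gt0 PiC).
Qed.

Lemma margK_le_solitary_value i C w : C \in P i -> w \in C ->
  mass mu C * margK K c i <= mu w * v i 1%N w.
Proof.
move=> PiC Cw; have := (dominant PiC Cw Cw).2.
by rewrite mulrAC ler_pdivlMr ?(mass_gt0 PiC) // mulrC.
Qed.

Lemma unsearched_value_le s i C u w :
  redundancy_free P K s -> lex_maximal s -> C \in P i ->
  u \in s i C -> w \in C -> w \notin covered s ->
  mu w * v i 1%N w <= mu u * v i 1%N u.
Proof.
move=> s_rf s_max PiC Au Cw uncov_w; rewrite leNgt; apply/negP => lt_uw.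
have Cu : u \in C by apply: subsetP Au; case: s_rf => /(_ i C PiC)[].
have su : searches s i u by rewrite (searches_cell _ PiC Cu).
have nsw : ~~ searches s i w := contra (@searches_covered s i w) uncov_w.
have same_cell : cell i w = cell i u by rewrite !(cell_eq PiC).
have [le_U eq_U] := s_max _ (exchange_redundancy_free s_rf su uncov_w same_cell).
have value_le := consistent PiC Cu Cw lt_uw.
move: le_U eq_U; rewrite !U_CI_split /social_value /solitary_welfare.
rewrite covered_exchange // searched_pairs_exchange total_cost_exchange //.
have pair_u : (i, u) \in searched_pairs s by rewrite inE.
have pair_w : (i, w) \notin searched_pairs s by rewrite inE.
rewrite !sumr_setU1D1 ?(searches_covered su) //.
set V := \sum_(x in covered s) _; move=> le_U eq_U.
suff /eq_U : V - mu u * vs u + mu w * vs w - total_cost s = V - total_cost s by lra.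
lra.
Qed.

Lemma cell_deviation_le i C (A B : {set Omega}) (m : Omega -> nat) :
  C \in P i -> A \subset C -> #|A| = K i -> (#|B| <= K i)%N ->
  (forall w, w \in B -> w \in A -> m w = 1%N) ->
  (forall u w, u \in A -> w \in B :\: A -> mu w * v i (m w) w <= mu u * v i 1%N u) ->
  \sum_(w in B) mu w * v i (m w) w - mass mu C * c i #|B| <=
  \sum_(w in A) mu w * v i 1%N w - mass mu C * c i (K i).
Proof.
move=> PiC AC cardA BK m1 dominated.
rewrite (big_setID A) [X in _ <= X - _](big_setID B) /= setIC.
rewrite (eq_bigr (fun w => mu w * v i 1%N w)); last by move=> w /setIP[Bw Aw]; rewrite m1.
have card_gap : #|A :\: B| = (#|B :\: A| + (K i - #|B|))%N.
  by have := cardsID B A; have := cardsID A B; rewrite setIC; lia.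
have dominated' u w : u \in A :\: B -> w \in B :\: A ->
    mu w * v i (m w) w <= mu u * v i 1%N u.
  by case/setDP => Au _; apply: dominated.
have margK_le u : u \in A :\: B -> mass mu C * margK K c i <= mu u * v i 1%N u.
  by case/setDP => Au _; apply: margK_le_solitary_value PiC (subsetP AC u Au).
have := ler_sum_pairwise card_gap dominated' margK_le.
have := ler_wpM2l (ltW (mass_gt0 PiC)) (cost_gap_le BK).
lra.
Qed.

Lemma solitary_value_dominates s i C u w :
  redundancy_free P K s -> lex_maximal s -> C \in P i ->
  u \in s i C -> w \in C -> w \notin s i C ->
  mu w * v i (mult P s w).+1 w <= mu u * v i 1%N u.
Proof.
move=> s_rf s_max PiC Au Cw Aw; have [s_ok [_ excl_s]] := s_rf.
have Cu : u \in C by apply: subsetP Au; exact: (s_ok i C PiC).1.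
case: (posnP (mult P s w)) => [mult0|mult_gt0].
  by rewrite mult0; apply: (unsearched_value_le s_rf s_max PiC) => //; rewrite inE mult0.
have -> : mult P s w = 1%N by apply/eqP; rewrite eqn_leq excl_s.
exact: crowded_value_le_solitary PiC Cu Cw.
Qed.

Lemma pure_NE_of_lex_maximal s :
  redundancy_free P K s -> lex_maximal s -> pure_NE P K mu v c s.
Proof.
move=> s_rf s_max; have [s_ok [s_full excl_s]] := s_rf.
split=> // i t t_ok.
have s_sub C : C \in P i -> s i C \subset C by case/s_ok.
have t_sub C : C \in P i -> deviate s i t i C \subset C by rewrite deviate_self; case/t_ok.
rewrite (payoff_by_cells t_sub) (payoff_by_cells s_sub) deviate_self.
apply: ler_sum => C PiC; have [AC _] := s_ok i C PiC; have [BC BK] := t_ok C PiC.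
have mult_dev w : w \in t C ->
    mult P (deviate s i t) w = if w \in s i C then 1%N else (mult P s w).+1.
  move=> Bw; have Cw := subsetP BC w Bw.
  by rewrite mult_deviate ?(cell_eq PiC Cw) // (searches_cell _ PiC Cw).
rewrite [X in _ <= X - _](eq_bigr (fun w => mu w * v i 1%N w)) ?(s_full i C PiC); last first.
  move=> w Aw; have sw : searches s i w by rewrite (searches_cell _ PiC (subsetP AC w Aw)).
  by rewrite (mult_exclusive excl_s sw).
apply: (cell_deviation_le PiC AC (s_full i C PiC) BK).
  by move=> w Bw Aw; rewrite mult_dev ?Aw.
move=> u w Au /setDP[Bw nAw]; rewrite mult_dev // (negbTE nAw).
exact: solitary_value_dominates s_max PiC Au (subsetP BC w Bw) nAw.
Qed.

End Equilibrium.

End SearchGame.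

Theorem proposition3 (R : realFieldType) (n : nat) (Omega : finType)
  (P : 'I_n -> {set {set Omega}}) (mu : Omega -> R) (K : 'I_n -> nat)
  (c : 'I_n -> nat -> R) (v : 'I_n -> nat -> Omega -> R) (vs : Omega -> R) :
  is_search_game P mu K c v vs ->
  ordinally_consistent P mu v vs ->
  solitary_search_dominant P mu K c v ->
  social_value_outweighs_cost P mu K c vs ->
  (exists s0 : profile n Omega, redundancy_free P K s0) ->
  exists s : profile n Omega,
    pure_NE P K mu v c s /\
    (forall s' : profile n Omega, profile_ok P K s' -> U_CI P mu vs c s' <= U_CI P mu vs c s).
Proof.
move=> [partP [_ [mass_gt0 [c_shape _]]]] consistent dominant outweighs [s0 s0_rf].
have c0 i := (c_shape i).1.
have c_ge0 i := (c_shape i).2.1.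
have c_convex i := (c_shape i).2.2.
have [s [s_rf s_max]] := @profile_lex_argmax _ _ _ (redundancy_free P K)
  (U_CI P mu vs c) (solitary_welfare P mu v) (ex_intro _ s0 s0_rf).
exists s; split.
  exact: (pure_NE_of_lex_maximal partP c_convex mass_gt0 consistent dominant s_rf s_max).
move=> s' /(redundancy_free_improvement partP c0 c_ge0 c_convex mass_gt0 s0_rf outweighs).
by case=> s'' s''_rf le_s''; apply: le_trans le_s'' (s_max s'' s''_rf).1.
Qed.
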